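(* Let $n=3N^3$ for an integer $N\ge1$, let $\mathcal{A}\in\mathbb{C}^{n\times n}$, $\mathcal{B}\in\mathbb{C}^{N^3\times n}$, let $M_0\in\mathbb{R}^{n\times n}$ be diagonal with positive diagonal entries, and let $\gamma>0$. Assume $\mathcal{B}\mathcal{A}=0$, and let $\mathcal{H}:=\ker\mathcal{A}'\cap\ker\mathcal{B}$; assume $\dim\mathcal{H}$ is either $0$ or bounded independently of $N$. Let the eigenvalues of the Hermitian positive semidefinite matrix $\mathcal{A}M_0\mathcal{A}'$ be $N_0^{\mathcal{A}}$ zeros followed by the positive eigenvalues $\lambda^{\mathcal{A}}_1\le\cdots\le\lambda^{\mathcal{A}}_{N_1^{\mathcal{A}}}$, and let the eigenvalues of $\mathcal{B}'\mathcal{B}$ be $N_0^{\mathcal{B}}$ zeros followed by the positive eigenvalues $\lambda^{\mathcal{B}}_1\le\cdots\le\lambda^{\mathcal{B}}_{N_1^{\mathcal{B}}}$ (all counted with multiplicity). Then the eigenvalues of $\mathcal{A}M_0\mathcal{A}'+\gamma\mathcal{B}'\mathcal{B}$, listed in nondecreasing order, are $$\underbrace{0,\dots,0}_{\dim\mathcal{H}\text{ zeros}}<\lambda_1\le\lambda_2\le\cdots\le\lambda_m\le\cdots,$$ and $$\{\lambda_1,\dots,\lambda_m,\dots\}=\{\lambda^{\mathcal{A}}_1,\dots,\lambda^{\mathcal{A}}_{N_1^{\mathcal{A}}}\}\cup\{\gamma\lambda^{\mathcal{B}}_1,\dots,\gamma\lambda^{\mathcal{B}}_{N_1^{\mathc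al{B}}}\}.$$
   Context: For a complex matrix $X$, $X'$ denotes its conjugate transpose; $\ker X$ is its null space. *)

From HB Require Import structures.
From mathcomp Require Import all_boot all_order all_algebra.
Set Implicit Arguments. Unset Strict Implicit. Unset Printing Implicit Defensive.
Import Order.TTheory GRing.Theory Num.Theory.
Local Open Scope ring_scope.

Definition ctmx (C : numClosedFieldType) m n (X : 'M[C]_(m, n)) : 'M[C]_(n, m) :=
  (map_mx Num.conj X)^T.

(* The null space ker X = { x : 'cV_n | X *m x = 0 }, represented (as is
   customary in mxalgebra) as the row space of a matrix of row vectors:
   x^T *m X^T = 0. *)
Definition kerC (C : numClosedFieldType) m n (X : 'M[C]_(m, n)) : 'M[C]_n :=
  kermx X^T.

(* Multiset of eigenvalues of a square matrix given as: k zeros followed by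
   the sorted positive values s (with multiplicity), via the characteristic
   polynomial. *)
Definition eig_zeros_then (C : numClosedFieldType) n (X : 'M[C]_n)
    (k : nat) (s : seq C) : Prop :=
  [/\ char_poly X = 'X^k * \prod_(x <- s) ('X - x%:P),
      all (fun x => 0 < x) s & sorted <=%R s].

(* With P = A D A' and Q = B'B, the hypothesis BA = 0 gives P Q = 0, hence
   (x - P)(x - gamma Q) = x (x - (P + gamma Q)) and
   char(P) char(gamma Q) = x^n char(P + gamma Q): away from 0, the spectrum of
   P + gamma Q is the union of the spectra of P and gamma Q.  Since P + gamma Q
   is Hermitian it is diagonalizable, so 0 is a root of its characteristic
   polynomial of multiplicity dim ker(P + gamma Q); and
   x'(P + gamma Q)x = |D^(1/2) A'x|^2 + gamma |Bx|^2 shows that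
   ker(P + gamma Q) = ker A' :&: ker B. *)

From HB Require Import structures.
From mathcomp Require Import all_boot all_order all_algebra.
Import Order.TTheory GRing.Theory Num.Theory.
Local Open Scope ring_scope.
Set Implicit Arguments. Unset Strict Implicit. Unset Printing Implicit Defensive.

Section ConjTranspose.
Variable C : numClosedFieldType.

Lemma ctmxK m n (X : 'M[C]_(m, n)) : ctmx (ctmx X) = X.
Proof. by apply/matrixP => i j; rewrite !mxE conjCK. Qed.

Lemma ctmxM m n p (X : 'M[C]_(m, n)) (Y : 'M[C]_(n, p)) :
  ctmx (X *m Y) = ctmx Y *m ctmx X.
Proof. by rewrite /ctmx map_mxM trmx_mul. Qed.

Lemma ctmxD m n (X Y : 'M[C]_(m, n)) : ctmx (X + Y) = ctmx X + ctmx Y.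
Proof. by apply/matrixP => i j; rewrite !mxE rmorphD. Qed.

Lemma ctmxZ m n a (X : 'M[C]_(m, n)) : ctmx (a *: X) = Num.conj a *: ctmx X.
Proof. by apply/matrixP => i j; rewrite !mxE rmorphM. Qed.

Lemma ctmx_diag_real n (d : 'rV[C]_n) :
  (forall i, d 0 i \is Num.real) -> ctmx (diag_mx d) = diag_mx d.
Proof.
move=> dR; apply/matrixP => i j; rewrite !mxE.
by case: eqVneq => [->|_]; rewrite ?mulr1n ?mulr0n ?conjC0 ?conj_Creal.
Qed.

Lemma ctmx_normalmx n (X : 'M[C]_n) : ctmx X = X -> X \is normalmx.
Proof. by move=> hX; apply/normalmxP; rewrite -map_trmx -/(ctmx X) hX. Qed.

Lemma sub_kerC k m n (W : 'M[C]_(k, n)) (X : 'M[C]_(m, n)) :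
  (W <= kerC X)%MS = (X *m W^T == 0).
Proof. by rewrite sub_kermx -[W in LHS]trmxK -trmx_mul trmx_eq0. Qed.

End ConjTranspose.

Section WeightedGram.
Variables (C : numClosedFieldType) (p k : nat) (e : 'rV[C]_p).
Hypothesis e_gt0 : forall i, 0 < e 0 i.

Let term_ge0 (Y : 'M[C]_(p, k)) i j : 0 <= e 0 i * `|Y i j| ^+ 2.
Proof. by rewrite mulr_ge0 ?exprn_ge0 // ltW. Qed.

Lemma mxtrace_weighted_gram (Y : 'M[C]_(p, k)) :
  \tr (ctmx Y *m diag_mx e *m Y) = \sum_j \sum_i e 0 i * `|Y i j| ^+ 2.
Proof.
rewrite /mxtrace; apply: eq_bigr => j _; rewrite mxE; apply: eq_bigr => i _.
by rewrite mul_mx_diag !mxE normCK mulrAC mulrC [_^* * _]mulrC.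
Qed.

Lemma mxtrace_weighted_gram_ge0 (Y : 'M[C]_(p, k)) :
  0 <= \tr (ctmx Y *m diag_mx e *m Y).
Proof.
by rewrite mxtrace_weighted_gram; do 2!apply: sumr_ge0 => ? _; apply: term_ge0.
Qed.

Lemma mxtrace_weighted_gram_eq0 (Y : 'M[C]_(p, k)) :
  \tr (ctmx Y *m diag_mx e *m Y) = 0 -> Y = 0.
Proof.
rewrite mxtrace_weighted_gram => tr0; apply/matrixP => i j; rewrite mxE.
have col0 : \sum_i e 0 i * `|Y i j| ^+ 2 = 0.
  by apply: (psumr_eq0P _ tr0) => // j' _; apply: sumr_ge0 => ? _; apply: term_ge0.
have /eqP := psumr_eq0P (fun i _ => term_ge0 Y i j) col0 (i := i) isT.
by rewrite mulf_eq0 gt_eqF //= expf_eq0 normr_eq0 => /eqP.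
Qed.

End WeightedGram.

Lemma char_poly_add_mul0 (R : comNzRingType) n (P Q : 'M[R]_n) : P *m Q = 0 ->
  char_poly P * char_poly Q = 'X^n * char_poly (P + Q).
Proof.
move=> PQ0; rewrite /char_poly -det_mulmx -detZ; congr (\det _).
rewrite /char_poly_mx mulmxBl !mulmxBr -map_mxM PQ0 map_mx0 subr0 !mul_scalar_mx.
by rewrite mul_mx_scalar map_mxD scalerBr scalerDr opprD addrA addrAC.
Qed.

Lemma char_poly_conjmx (F : fieldType) n (P X : 'M[F]_n) : P \in unitmx ->
  char_poly (conjmx P X) = char_poly X.
Proof.
move=> Pu; rewrite conjumx // /char_poly.
have -> : char_poly_mx (P *m X *m invmx P) =
    map_mx polyC P *m char_poly_mx X *m map_mx polyC (invmx P).
  rewrite /char_poly_mx mulmxBr mulmxBl !map_mxM; congr (_ - _).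
  by rewrite -mulmxA -scalar_mxC mulmxA -map_mxM mulmxV // map_mx1 mul1mx.
rewrite !det_mulmx !det_map_mx mulrC mulrA -rmorphM -det_mulmx.
by rewrite mulVmx // det1 rmorph1 mul1r.
Qed.

Lemma mxrank_conjmx (F : fieldType) n (U X : 'M[F]_n) : U \in unitmx ->
  \rank (conjmx U X) = \rank X.
Proof.
move=> Uu; rewrite conjumx // mxrankMfree ?row_free_unit ?unitmx_inv //.
by rewrite eqmxMfull ?row_full_unit.
Qed.

Lemma char_poly_diag (R : comNzRingType) n (s : 'rV[R]_n) :
  char_poly (diag_mx s) = \prod_i ('X - (s 0 i)%:P).
Proof.
rewrite char_poly_trig ?diag_mx_is_trig //.
by apply: eq_bigr => i _; rewrite mxE eqxx mulr1n.
Qed.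

Lemma mxrank_diag (F : fieldType) n (s : 'rV[F]_n) :
  \rank (diag_mx s) = #|[pred i | s 0 i != 0]|.
Proof.
elim: n s => [|n IHn] s; first by rewrite thinmx0 mxrank0; apply/esym/eq_card0 => -[].
move: s; rewrite -[n.+1]/(1 + n)%N => s.
rewrite -[s]hsubmxK diag_mx_row rank_diag_block_mx IHn.
rewrite -!sum1_card big_split_ord /=; congr (_ + _)%N; last first.
  by apply: eq_bigl => i; rewrite !inE row_mxEr.
rewrite big_mkcond big_ord1 inE row_mxEl rank_rV.
have -> : (diag_mx (lsubmx s) == 0) = (lsubmx s 0 0 == 0).
  apply/eqP/eqP => [/matrixP/(_ 0 0)|s0]; first by rewrite !mxE eqxx mulr1n.
  by apply/matrixP => i j; rewrite !ord1 [diag_mx _ 0 0]mxE eqxx mulr1n s0 mxE.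
by case: eqP.
Qed.

Lemma prod_diag_split (F : fieldType) n (s : 'rV[F]_n) :
  \prod_i ('X - (s 0 i)%:P) =
    'X^(n - \rank (diag_mx s)) * \prod_(i | s 0 i != 0) ('X - (s 0 i)%:P).
Proof.
rewrite (bigID (fun i => s 0 i == 0)) /=; congr (_ * _).
rewrite (eq_bigr (fun=> 'X)) => [|i /eqP->]; last by rewrite subr0.
have := cardC [pred i | s 0 i != 0]; rewrite card_ord => nE.
rewrite prodr_const mxrank_diag -[X in (X - _)%N]nE addKn; congr ('X ^+ _).
by apply: eq_card => i; rewrite !inE negbK.
Qed.

Lemma char_poly_normal (C : numClosedFieldType) n (X : 'M[C]_n) : X \is normalmx ->
  exists2 q : {poly C}, char_poly X = 'X^(n - \rank X) * q & q.[0] != 0.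
Proof.
move=> /orthomx_spectralP; set U := spectralmx X; set s := spectral_diag X.
have Uu : U \in unitmx := spectral_unit X.
rewrite -conjVmx // => EX; exists (\prod_(i | s 0 i != 0) ('X - (s 0 i)%:P)).
  rewrite EX char_poly_conjmx ?mxrank_conjmx ?unitmx_inv //.
  by rewrite char_poly_diag prod_diag_split.
rewrite horner_prod; apply/prodf_neq0 => i s_neq0.
by rewrite hornerXsubC sub0r oppr_eq0.
Qed.

(* Schur triangularization: the diagonal of a triangular conjugate of X lists
   the roots of char_poly X, and scaling keeps it triangular. *)
Lemma char_poly_scale (C : numClosedFieldType) n (X : 'M[C]_n) (a : C) (r : seq C) :
  char_poly X = \prod_(x <- r) ('X - x%:P) ->
  char_poly (a *: X) = \prod_(x <- r) ('X - (a * x)%:P).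
Proof.
have [|P /unitarymx_unit Pu /allP/(_ X (mem_head _ _)) /= trigX] :=
  @cotrigonalization _ _ [:: X]; first by move=> ? ? /[!inE] /eqP-> /eqP->.
set T := conjmx P X in trigX.
have trig_aT : is_trig_mx (a *: T).
  move/is_trig_mxP: trigX => T0.
  by apply/is_trig_mxP => i j /T0 Tij; rewrite mxE Tij mulr0.
have charT : char_poly T = \prod_(x <- [seq T i i | i <- index_enum 'I_n]) ('X - x%:P).
  by rewrite char_poly_trig // big_map.
rewrite -(char_poly_conjmx _ Pu) -/T charT => /prod_XsubC_eq permT.
rewrite -(char_poly_conjmx _ Pu) /conjmx -scalemxAr -scalemxAl -/(conjmx P X) -/T.
rewrite char_poly_trig // -(big_map (fun x => a * x) predT (fun x => 'X - x%:P)).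
rewrite -(perm_big _ (perm_map (fun x => a * x) permT)) /= -map_comp big_map.
by apply: eq_bigr => i _; rewrite mxE.
Qed.

Lemma mulXn_cancel (R : idomainType) i j (p q : {poly R}) :
  p.[0] != 0 -> q.[0] != 0 -> 'X^i * p = 'X^j * q -> p = q.
Proof.
wlog le_ij : i j p q / (i <= j)%N => [hwlog|].
  case: (leqP i j) => [|/ltnW] le; first exact: hwlog.
  by move=> p0 q0 E; apply/esym/(hwlog j i).
move=> p0 q0; rewrite -(subnKC le_ij) exprD -mulrA.
move/(mulfI (monic_neq0 (monicXn _ _))) => pE; move: p0; rewrite pE.
case: (j - i)%N => [|k]; first by rewrite expr0 mul1r.
by rewrite hornerM hornerXn expr0n mul0r eqxx.
Qed.

Lemma prod_XsubC_horner0_neq0 (R : numDomainType) (s : seq R) :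
  all (fun x => 0 < x) s -> (\prod_(x <- s) ('X - x%:P)).[0] != 0.
Proof.
move=> /allP s_gt0; rewrite horner_prod prodf_seq_neq0.
by apply/allP => x /s_gt0 x_gt0; rewrite hornerXsubC sub0r oppr_eq0 gt_eqF.
Qed.

Section EigZerosThen.
Variable C : numClosedFieldType.

Lemma eig_zeros_then_sort n (X : 'M[C]_n) k (s : seq C) :
  char_poly X = 'X^k * \prod_(x <- s) ('X - x%:P) -> all (fun x => 0 < x) s ->
  eig_zeros_then X k (sort <=%R s).
Proof.
move=> chX s_gt0; split; last 2 first.
- by rewrite all_sort.
- apply: (sort_sorted_in (P := [pred x | 0 < x])) => // x y.
  by move=> /gtr0_real xR /gtr0_real yR; apply: real_leVge.
by rewrite chX (perm_big _ (permEl (perm_sort _ _))).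
Qed.

Lemma eig_zeros_then_scale n (X : 'M[C]_n) k (s : seq C) (a : C) :
  0 < a -> eig_zeros_then X k s ->
  eig_zeros_then (a *: X) k (map (fun x => a * x) s).
Proof.
move=> a_gt0 [chX s_gt0 s_sorted]; split.
- rewrite (@char_poly_scale _ _ X a (nseq k 0 ++ s)) big_cat big_nseq; last first.
    by rewrite subr0 iter_mulr_1.
  by rewrite [a * _]mulr0 subr0 iter_mulr_1 big_map.
- by rewrite all_map; apply/allP => x /(allP s_gt0) x_gt0 /=; rewrite mulr_gt0.
- by apply: homo_sorted s_sorted => x y; rewrite ler_pM2l.
Qed.

End EigZerosThen.

Section GramSum.
Variables (C : numClosedFieldType) (n m p : nat).
Variables (A : 'M[C]_(n, p)) (B : 'M[C]_(m, n)) (d : 'rV[C]_p) (g : C).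
Hypotheses (d_gt0 : forall i, 0 < d 0 i) (g_gt0 : 0 < g) (BA0 : B *m A = 0).

Let P := A *m diag_mx d *m ctmx A.
Let Q := ctmx B *m B.

Lemma ctmx_gram_sum : ctmx (P + g *: Q) = P + g *: Q.
Proof.
have dR i : d 0 i \is Num.real by rewrite gtr0_real.
rewrite ctmxD ctmxZ conj_Creal ?gtr0_real // /P /Q !ctmxM !ctmxK.
by rewrite ctmx_diag_real // mulmxA.
Qed.

Lemma gram_mul0 : P *m (g *: Q) = 0.
Proof.
have AB0 : ctmx A *m ctmx B = 0.
  by rewrite -ctmxM BA0; apply/matrixP => i j; rewrite !mxE conjC0.
by rewrite /P /Q -scalemxAr mulmxA -(mulmxA _ (ctmx A)) AB0 mulmx0 mul0mx scaler0.
Qed.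

Lemma kerC_gram_sum : (kerC (ctmx A) :&: kerC B == kerC (P + g *: Q))%MS.
Proof.
set M := _ + _; apply/andP; split.
  set W := (_ :&: _)%MS.
  have /eqP AW : ctmx A *m W^T == 0 by rewrite -sub_kerC capmxSl.
  have /eqP BW : B *m W^T == 0 by rewrite -sub_kerC capmxSr.
  by rewrite sub_kerC mulmxDl -scalemxAl -!mulmxA AW BW !mulmx0 scaler0 addr0.
set X := (kerC M)^T.
have /eqP MX : M *m X == 0 by rewrite -sub_kerC submx_refl.
set Y := ctmx A *m X; set Z := B *m X.
have one_gt0 (j : 'I_m) : 0 < (const_mx 1 : 'rV[C]_m) 0 j by rewrite mxE ltr01.
have trE : \tr (ctmx X *m M *m X) =
    \tr (ctmx Y *m diag_mx d *m Y) + g * \tr (ctmx Z *m diag_mx (const_mx 1) *m Z).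
  rewrite -mxtraceZ -mxtraceD diag_const_mx mulmx1 !ctmxM ctmxK.
  by rewrite mulmxDr mulmxDl -scalemxAr -scalemxAl !mulmxA.
move: trE; rewrite -mulmxA MX mulmx0 mxtrace0 => /esym/eqP.
rewrite paddr_eq0 ?mulr_ge0 ?(ltW g_gt0) ?mxtrace_weighted_gram_ge0 //.
rewrite mulf_eq0 (gt_eqF g_gt0) /= => /andP[/eqP trY /eqP trZ].
rewrite sub_capmx !sub_kerC; apply/andP; split; apply/eqP.
  exact: mxtrace_weighted_gram_eq0 d_gt0 _ trY.
exact: mxtrace_weighted_gram_eq0 one_gt0 _ trZ.
Qed.

Lemma eig_zeros_then_gram_sum N0A lamA N0B lamB :
  eig_zeros_then P N0A lamA -> eig_zeros_then Q N0B lamB ->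
  eig_zeros_then (P + g *: Q) (\rank (kerC (ctmx A) :&: kerC B)%MS)
    (sort <=%R (lamA ++ map (fun x => g * x) lamB)).
Proof.
move=> [chP lamA_gt0 _] /(eig_zeros_then_scale g_gt0) [chgQ lamgB_gt0 _].
have [q chM q0] := char_poly_normal (ctmx_normalmx ctmx_gram_sum).
rewrite (eqmx_rank kerC_gram_sum) mxrank_ker mxrank_tr.
apply: eig_zeros_then_sort; last by rewrite all_cat lamA_gt0.
rewrite chM big_cat /=; congr (_ * _); apply/esym.
have := char_poly_add_mul0 gram_mul0; rewrite chP chgQ chM.
rewrite mulrACA ['X^n * _]mulrA -[_ * 'X^N0B]exprD -['X^n * _]exprD.
by apply: mulXn_cancel; rewrite // hornerM mulf_neq0 ?prod_XsubC_horner0_neq0.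
Qed.

End GramSum.

Theorem proposition3p2 (C : numClosedFieldType) (N : nat) (hN : (1 <= N)%N)
    (A : 'M[C]_(3 * N ^ 3)) (B : 'M[C]_(N ^ 3, 3 * N ^ 3))
    (d : 'rV[C]_(3 * N ^ 3)) (gamma : C)
    (hd : forall i, 0 < d 0 i) (hgamma : 0 < gamma)
    (hBA : B *m A = 0)
    (N0A : nat) (lamA : seq C) (N0B : nat) (lamB : seq C)
    (hA : eig_zeros_then (A *m diag_mx d *m ctmx A) N0A lamA)
    (hB : eig_zeros_then (ctmx B *m B) N0B lamB) :
  let dimH := \rank (kerC (ctmx A) :&: kerC B)%MS in
  exists lam : seq C,
    eig_zeros_then (A *m diag_mx d *m ctmx A + gamma *: (ctmx B *m B)) dimH lam
    /\ perm_eq lam (lamA ++ map (fun x => gamma * x) lamB).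
Proof.
exists (sort <=%R (lamA ++ map (fun x => gamma * x) lamB)); split.
  exact: (eig_zeros_then_gram_sum hd hgamma hBA hA hB).
by rewrite perm_sort.
Qed.
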